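(* Let $B$ be a ring, $X$ an $m\times n$ matrix of indeterminates, and $\delta=[c_1,\ldots,c_r|d_1,\ldots,d_r]\in\Delta(X)$, with associated $t$ and $\tau_i$ ($1\le i\le t$) as in the context. For every $1\le i\le t$ there exists an integer $1\le N_i\le r$ such that: (1) if $[e_1,\ldots,e_s|f_1,\ldots,f_s]\in\Delta(X;\delta)\setminus\Delta(X;\tau_i)$, then $s\ge N_i$; (2) for every $N_i\le s\le r$, $[c_1,\ldots,c_s|d_1,\ldots,d_s]\in\Delta(X;\delta)\setminus\Delta(X;\tau_i)$.
   Context: Let $B$ be a ring and $X$ an $m\times n$ matrix of indeterminates over $B$. For $1\le r\le\min\{m,n\}$, $1\le a_1<\cdots<a_r\le m$, $1\le b_1<\cdots<b_r\le n$, $[a_1,\ldots,a_r|b_1,\ldots,b_r]$ is the $r$-minor of $X$ with those rows and columns; $\Delta(X)$ is the set of all such minors, ordered by $[a_1,\ldots,a_r|b_1,\ldots,b_r]\le[c_1,\ldots,c_s|d_1,\ldots,d_s]$ iff $r\ge s$ and $a_i\le c_i$, $b_i\le d_i$ for $1\le i\le s$. For $\gamma\in\Delta(X)$, $\Delta(X;\gamma)=\{\xi\in\Delta(X)\mid\xi\ge\gamma\}$. Associated data: Let $N=n+m$. For $\delta=[c_1,\ldots,c_r|d_1,\ldots,d_r]$, let $\tilde\delta=[a_1,\ldots,a_m]$ be the increasing listing of $\{d_1,\ldots,d_r\}\cup\{m+n+1-e\mid e\in\{1,\ldots,m\}\setminus\{c_1,\ldots,c_r\}\}$. To a sequence $1\le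 b_1<\cdots<b_m\le N$ with $[b_1,\ldots,b_m]\ne[n+1,\ldots,n+m]$ associate the minor $[e_1,\ldots,e_s|b_1,\ldots,b_s]\in\Delta(X)$, where $s=\max\{j\mid b_j\le n\}$ and $\{e_1<\cdots<e_s\}=\{1,\ldots,m\}\setminus\{m+n+1-b_j\mid s<j\le m\}$. Blocks of $\tilde\delta$: set $a_{m+1}=N+1$; decompose $\{a_1,\ldots,a_m\}$ into maximal runs of consecutive integers; if $a_m=N$ the run containing $N$ is $\beta_{t+1}$, else $\beta_{t+1}=\emptyset$; the other runs in increasing order are $\beta_0,\ldots,\beta_t$, $\beta_i=\{a_{k(i)+1},\ldots,a_{k(i+1)}\}$, $0=k(0)<\cdots<k(t+1)$. For $1\le i\le t$, $\tilde\tau_i$ is the increasing listing of $(\{a_1,\ldots,a_m\}\setminus\{a_{k(i)}\})\cup\{a_{k(i+1)}+1\}$. If $\tilde\tau_i\ne[n+1,\ldots,n+m]$, $\tau_i\in\Delta(X;\delta)$ is the minor associated to $\tilde\tau_i$; if $\tilde\tau_i=[n+1,\ldots,n+m]$, one sets $\Delta(X;\tau_i)=\emptyset$. *)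

From mathcomp Require Import all_boot.
Set Implicit Arguments. Unset Strict Implicit. Unset Printing Implicit Defensive.

(* A minor [a_1..a_r | b_1..b_r] of a generic m x n matrix is represented by
   the pair (row indices, column indices), 1-based. *)
Definition minor := (seq nat * seq nat)%type.

Definition is_minor (m n : nat) (xi : minor) : bool :=
  [&& size xi.1 == size xi.2, 0 < size xi.1, size xi.1 <= minn m n,
      sorted ltn xi.1, sorted ltn xi.2,
      all (fun a => 0 < a <= m) xi.1 & all (fun b => 0 < b <= n) xi.2].

Definition minor_le (xi eta : minor) : bool :=
  (size eta.1 <= size xi.1) &&
  all (fun i => (nth 0 xi.1 i <= nth 0 eta.1 i) && (nth 0 xi.2 i <= nth 0 eta.2 i))
      (iota 0 (size eta.1)).

Definition tilde (m n : nat) (delta : minor) : seq nat :=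
  sort leq (delta.2 ++ [seq m + n + 1 - e | e <- iota 1 m & e \notin delta.1]).

(* The minor associated to a sequence b_1 < ... < b_m (b <> [n+1..n+m]). *)
Definition assoc_minor (m n : nat) (b : seq nat) : minor :=
  let s := size [seq x <- b | x <= n] in
  ([seq e <- iota 1 m | e \notin [seq m + n + 1 - x | x <- drop s b]], take s b).

(* Blocks of a = tilde delta, with sentinel a_{m+1} = N+1, N = n+m.
   run_ends = the (1-based) positions j in [1,m] with a_{j+1} <> a_j + 1;
   these are k(1) < ... < k(t+1), the ends of beta_0, ..., beta_t
   (the run containing N, if any, is beta_{t+1} and has no such end). *)
Definition run_ends (m n : nat) (a : seq nat) : seq nat :=
  let ext := rcons a (n + m + 1) in
  [seq j <- iota 1 m | nth 0 ext j != (nth 0 ext j.-1).+1].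

Definition tt (m n : nat) (a : seq nat) : nat := (size (run_ends m n a)).-1.

Definition kk (m n : nat) (a : seq nat) (i : nat) : nat :=
  if i == 0 then 0 else nth 0 (run_ends m n a) i.-1.

Definition aj (a : seq nat) (j : nat) : nat := nth 0 a j.-1.

Definition tau_tilde (m n : nat) (a : seq nat) (i : nat) : seq nat :=
  sort leq (rcons (rem (aj a (kk m n a i)) a) (aj a (kk m n a i.+1)).+1).

(* xi \in Delta(X; tau_i)  (empty if tilde tau_i = [n+1..n+m]) *)
Definition in_Delta_tau (m n : nat) (delta : minor) (i : nat) (xi : minor) : bool :=
  let tt_i := tau_tilde m n (tilde m n delta) i in
  [&& tt_i != iota n.+1 m, is_minor m n xi & minor_le (assoc_minor m n tt_i) xi].

Definition in_diff (m n : nat) (delta : minor) (i : nat) (xi : minor) : bool :=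
  [&& is_minor m n xi, minor_le delta xi & ~~ in_Delta_tau m n delta i xi].

From mathcomp Require Import all_boot zify.
Set Implicit Arguments. Unset Strict Implicit. Unset Printing Implicit Defensive.

(* The heart of the matter is that delta itself is not in Delta(X;tau_i).
   Write p = a_{k(i)} < q = a_{k(i+1)}; since q ends a block other than the
   one containing N, q + 1 <= N is not an entry of tilde delta, and tilde
   tau_i trades p for q + 1.  If q < n, the minor of tilde tau_i has strictly
   fewer columns <= p than delta, if n <= q it has strictly fewer rows
   <= m + n - q than delta; either way it cannot lie below delta, because
   componentwise domination of increasing sequences forces domination of
   these counts.  Now the truncations delta_s = [c_1..c_s|d_1..d_s] increase
   as s decreases, every xi >= delta with s rows satisfies delta_s <= xi,
   and Delta(X;tau_i) is an up-set: so N_i can be taken to be the least s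
   for which delta_s is not in Delta(X;tau_i). *)

Lemma count_leq_split (s : seq nat) h :
  count (fun x => x <= h) s = count (fun x => x < h) s + count_mem h s.
Proof. by elim: s => //= x s ->; case: ltngtP; lia. Qed.

Lemma filter_leq_sorted (s : seq nat) h : sorted leq s ->
  [seq x <- s | x <= h] = take (count (fun x => x <= h) s) s /\
  [seq x <- s | h < x] = drop (count (fun x => x <= h) s) s.
Proof.
elim: s => //= x s IH x_s.
have [le_xh | lt_hx] := leqP x h; first by case: (IH (path_sorted x_s)) => -> ->.
have gt_s : {in s, forall y, h < y}.
  by move=> y /(allP (order_path_min leq_trans x_s)); apply: leq_trans.
rewrite (eq_in_count (a2 := pred0)) ?count_pred0; last by move=> y /gt_s /=; lia.
rewrite (eq_in_filter (a2 := pred0)) ?filter_pred0; last by move=> y /gt_s /=; lia.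
by rewrite (eq_in_filter (a2 := predT)) ?filter_predT // => y /gt_s ->.
Qed.

Lemma count_leq_of_nth_leq (X Y : seq nat) h : sorted leq Y ->
  (forall j, j < size Y -> nth 0 X j <= nth 0 Y j) ->
  count (fun x => x <= h) Y <= size X ->
  count (fun x => x <= h) Y <= count (fun x => x <= h) X.
Proof.
move=> Y_sorted XY; set q := count _ Y => q_X.
have q_Y : q <= size Y by exact: count_size.
have Y_head j : j < q -> nth 0 Y j <= h.
  move=> j_q; have : nth 0 (take q Y) j \in [seq x <- Y | x <= h].
    by have [-> _] := filter_leq_sorted h Y_sorted; rewrite mem_nth // size_takel.
  by rewrite mem_filter nth_take // => /andP[].
rewrite -(cat_take_drop q X) count_cat.
suff -> : count (fun x => x <= h) (take q X) = q by exact: leq_addr.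
have size_q : size (take q X) = q by rewrite size_takel.
apply/eqP; rewrite -{2}size_q -all_count; apply/(all_nthP 0) => j.
rewrite size_q => j_q; rewrite nth_take //.
by apply: leq_trans (XY j (leq_trans j_q q_Y)) (Y_head j j_q).
Qed.

Lemma count_leq_lt_of_sub (X Y : seq nat) h : uniq X -> h \in Y ->
  (forall x, x \in X -> x <= h -> (x < h) && (x \in Y)) ->
  count (fun x => x <= h) X < count (fun x => x <= h) Y.
Proof.
move=> X_uniq hY XY; rewrite [count _ Y]count_leq_split -addn1.
apply: leq_add; last by rewrite -has_count has_pred1.
rewrite -!size_filter; apply: uniq_leq_size; first exact: filter_uniq.
by move=> x; rewrite !mem_filter => /andP[le_xh /XY]; apply.
Qed.

Lemma sorted_ltn_uniq (s : seq nat) : sorted ltn s -> uniq s.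
Proof. by rewrite ltn_sorted_uniq_leq => /andP[]. Qed.

Lemma minor_size_eq m n (xi : minor) : is_minor m n xi -> size xi.1 = size xi.2.
Proof. by case/and5P=> /eqP. Qed.

Lemma minor_rows_sorted m n (xi : minor) : is_minor m n xi -> sorted ltn xi.1.
Proof. by case/and5P. Qed.

Lemma minor_cols_sorted m n (xi : minor) : is_minor m n xi -> sorted ltn xi.2.
Proof. by case/and5P=> _ _ _ _ /andP[]. Qed.

Lemma minor_rows_range m n (xi : minor) : is_minor m n xi -> {in xi.1, forall e, 0 < e <= m}.
Proof. by case/and5P=> _ _ _ _ /and3P[_ /allP]. Qed.

Lemma minor_cols_range m n (xi : minor) : is_minor m n xi -> {in xi.2, forall e, 0 < e <= n}.
Proof. by case/and5P=> _ _ _ _ /and3P[_ _ /allP]. Qed.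

Lemma is_minor_take m n (c d : seq nat) s : is_minor m n (c, d) -> 0 < s <= size c ->
  is_minor m n (take s c, take s d).
Proof.
case/and5P=> /eqP size_cd _ r_le c_sorted /and3P[d_sorted c_range d_range] /andP[s_pos s_le].
rewrite /is_minor /= !size_takel -?size_cd // eqxx s_pos (leq_trans s_le r_le).
rewrite !take_sorted //=; apply/andP; split; apply/allP => x /mem_take.
  exact: (allP c_range).
exact: (allP d_range).
Qed.

Lemma is_minor_take_pos m n (c d : seq nat) s : is_minor m n (take s c, take s d) -> 0 < s.
Proof. by case/and5P=> _ /=; rewrite size_take_min; lia. Qed.

Lemma minor_le_nth (xi eta : minor) j : minor_le xi eta -> j < size eta.1 ->
  nth 0 xi.1 j <= nth 0 eta.1 j /\ nth 0 xi.2 j <= nth 0 eta.2 j.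
Proof. by case/andP=> _ /allP le_all j_lt; apply/andP/le_all; rewrite mem_iota. Qed.

Lemma minor_le_refl : reflexive minor_le.
Proof. by move=> xi; rewrite /minor_le leqnn; apply/allP => j _; rewrite !leqnn. Qed.

Lemma minor_le_trans : transitive minor_le.
Proof.
move=> eta xi zeta xe ez; have /andP[size_xe _] := xe; have /andP[size_ez _] := ez.
rewrite /minor_le (leq_trans size_ez size_xe); apply/allP => j.
rewrite mem_iota add0n => /andP[_ j_lt].
have [le1 le2] := minor_le_nth ez j_lt.
have [le1' le2'] := minor_le_nth xe (leq_trans j_lt size_ez).
by rewrite (leq_trans le1' le1) (leq_trans le2' le2).
Qed.

Lemma minor_le_take (c d : seq nat) s t : t <= s ->
  minor_le (take s c, take s d) (take t c, take t d).
Proof.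
move=> t_s; rewrite /minor_le /= !size_take_min (_ : minn t _ <= _) /=; last by lia.
apply/allP => j; rewrite mem_iota => /andP[_ j_lt].
have j_t : j < t by lia.
by rewrite !nth_take ?(leq_trans j_t t_s) ?leqnn.
Qed.

Lemma minor_le_take_size (c d : seq nat) (xi : minor) : minor_le (c, d) xi ->
  minor_le (take (size xi.1) c, take (size xi.1) d) xi.
Proof.
case/andP=> /= size_le /allP le_all; rewrite /minor_le /= size_takel // leqnn /=.
apply/allP => j j_in; have := j_in; rewrite mem_iota add0n => /andP[_ j_lt].
by rewrite !nth_take //; apply: le_all.
Qed.

Lemma in_Delta_tau_le m n delta i (xi eta : minor) : in_Delta_tau m n delta i xi ->
  minor_le xi eta -> is_minor m n eta -> in_Delta_tau m n delta i eta.
Proof.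
case/and3P=> tau_ok _ tau_xi xi_eta eta_minor.
by rewrite /in_Delta_tau tau_ok eta_minor (minor_le_trans tau_xi xi_eta).
Qed.

Lemma mem_tilde m n (c d : seq nat) x :
  (x \in tilde m n (c, d)) =
  (x \in d) || [&& n < x, x <= m + n & m + n + 1 - x \notin c].
Proof.
rewrite mem_sort mem_cat; congr (_ || _); apply/mapP/idP => [[e]|/and3P[n_x x_le x_c]].
  rewrite mem_filter mem_iota => /andP[e_c e_range] ->.
  by rewrite subKn ?e_c ?andbT; lia.
by exists (m + n + 1 - x); [rewrite mem_filter mem_iota x_c /= | ]; lia.
Qed.

Section Tilde.

Variables (m n : nat) (c d : seq nat).
Hypothesis delta_minor : is_minor m n (c, d).

Lemma tilde_leq x : x \in tilde m n (c, d) -> x <= m + n.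
Proof.
by rewrite mem_tilde => /orP[/(minor_cols_range delta_minor) | /and3P[]]; lia.
Qed.

Lemma size_tilde : size (tilde m n (c, d)) = m.
Proof.
rewrite size_sort size_cat size_map size_filter -(minor_size_eq delta_minor).
have <- : count (mem c) (iota 1 m) = size c.
  rewrite -size_filter; apply/perm_size/uniq_perm.
  - by rewrite filter_uniq ?iota_uniq.
  - exact/sorted_ltn_uniq/(minor_rows_sorted delta_minor).
  by move=> e; rewrite mem_filter mem_iota andb_idr // => /(minor_rows_range delta_minor); lia.
by rewrite -[m in RHS](size_iota 1) -(count_predC (mem c)).
Qed.

Lemma tilde_sorted : sorted ltn (tilde m n (c, d)).
Proof.
rewrite ltn_sorted_uniq_leq sort_sorted ?andbT; last exact: leq_total.
have d_uniq := sorted_ltn_uniq (minor_cols_sorted delta_minor).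
rewrite sort_uniq cat_uniq d_uniq map_inj_in_uniq ?filter_uniq ?iota_uniq ?andbT //=.
  apply/hasPn => x /mapP[e]; rewrite mem_filter mem_iota => /andP[_ e_range] -> /=.
  by apply/negP => /(minor_cols_range delta_minor); lia.
by move=> x y; rewrite !mem_filter !mem_iota => /andP[_ ?] /andP[_ ?]; lia.
Qed.

End Tilde.

Lemma kk_run_ends m n a i : 1 <= i <= tt m n a ->
  [/\ 0 < kk m n a i, kk m n a i < kk m n a i.+1 & kk m n a i.+1 \in run_ends m n a].
Proof.
case: i => // j /= j_lt; rewrite /kk /=.
have j_lt' : j.+1 < size (run_ends m n a) by move: j_lt; rewrite /tt; case: size.
have ends_sorted : sorted ltn (run_ends m n a).
  exact: sorted_filter ltn_trans _ _ (iota_ltn_sorted 1 m).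
have /(mem_nth 0) : j < size (run_ends m n a) by exact: ltnW.
rewrite mem_filter mem_iota => /andP[_ /andP[-> _]].
by rewrite (sorted_ltn_nth ltn_trans 0 ends_sorted) ?inE ?mem_nth ?(ltnW j_lt').
Qed.

Lemma run_end_succ_notin m n a k : sorted ltn a -> size a = m ->
  {in a, forall x, x <= m + n} -> k \in run_ends m n a ->
  (aj a k).+1 <= m + n /\ (aj a k).+1 \notin a.
Proof.
move=> a_sorted size_a a_le; rewrite mem_filter mem_iota /aj.
rewrite !nth_rcons size_a => /andP[run_end /andP[k_pos k_le]].
have a_leq := sorted_leq_nth leq_trans leqnn 0 (sub_sorted ltnW a_sorted).
have a_ltn := sorted_ltn_nth ltn_trans 0 a_sorted.
rewrite (_ : k.-1 < m) in run_end; last by lia.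
have gap : k < m -> (nth 0 a k.-1).+1 < nth 0 a k.
  move=> k_lt; rewrite k_lt in run_end.
  have : nth 0 a k.-1 < nth 0 a k by rewrite a_ltn ?inE ?size_a //; lia.
  by move: run_end; lia.
split.
  have [k_lt | k_ge] := ltnP k m.
    have := a_le (nth 0 a k); rewrite mem_nth ?size_a // => /(_ isT).
    by move: (gap k_lt); lia.
  move: run_end; rewrite ltnNge k_ge /= (_ : k = m) ?eqxx; last by lia.
  by have := a_le (nth 0 a m.-1); rewrite mem_nth ?size_a //; lia.
apply/negP => /[dup] x_a /(nth_index 0); move: x_a; rewrite -index_mem size_a.
set j := index _ a => j_lt x_j.
have [j_le | j_gt] := leqP j k.-1.
  by have := a_leq j k.-1; rewrite !inE size_a x_j j_le; lia.
have := a_leq k j; rewrite !inE size_a x_j j_lt (_ : k <= j); last by lia.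
by have := gap (leq_ltn_trans (_ : k <= j) j_lt); lia.
Qed.

Lemma assoc_minorE m n (b : seq nat) : sorted leq b ->
  assoc_minor m n b =
  ([seq e <- iota 1 m | e \notin [seq m + n + 1 - x | x <- b & n < x]],
   [seq x <- b | x <= n]).
Proof.
move=> b_sorted; have [le_b gt_b] := filter_leq_sorted n b_sorted.
by rewrite /assoc_minor size_filter -le_b -gt_b.
Qed.

Section Exchange.

Variables (m n : nat) (c d : seq nat) (p q : nat).
Hypotheses (delta_minor : is_minor m n (c, d)) (p_a : p \in tilde m n (c, d))
  (p_le_q : p <= q) (q_succ_le : q.+1 <= m + n)
  (q_succ_notin : q.+1 \notin tilde m n (c, d)).

Local Notation a := (tilde m n (c, d)).
Local Notation tau := (sort leq (rcons (rem p a) q.+1)).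

Lemma mem_exchange x : (x \in tau) = (x == q.+1) || (x != p) && (x \in a).
Proof.
by rewrite mem_sort mem_rcons inE mem_rem_uniq // sorted_ltn_uniq ?tilde_sorted.
Qed.

Lemma exchange_uniq : uniq tau.
Proof.
rewrite sort_uniq rcons_uniq rem_uniq ?sorted_ltn_uniq ?tilde_sorted // andbT.
by apply: contra q_succ_notin => /mem_rem.
Qed.

Lemma assoc_exchange_not_le_cols : q < n -> ~~ minor_le (assoc_minor m n tau) (c, d).
Proof.
move=> q_n; rewrite assoc_minorE ?sort_sorted //; last exact: leq_total.
set X := [seq x <- tau | x <= n].
have d_sorted := minor_cols_sorted delta_minor.
have d_range := minor_cols_range delta_minor.
have p_d : p \in d by move: p_a; rewrite mem_tilde => /orP[// | /and3P[]]; lia.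
have X_sub x : x \in X -> x <= p -> (x < p) && (x \in d).
  rewrite mem_filter mem_exchange mem_tilde => /andP[x_n /orP[/eqP -> | ]]; first by lia.
  case/andP=> x_p /orP[x_d | /and3P[n_x _ _]] x_le; last by lia.
  by rewrite x_d andbT ltn_neqAle x_p.
have sub_X : {subset q.+1 :: [seq y <- d | y < p] <= X}.
  move=> y; rewrite inE mem_filter => /orP[/eqP -> | /andP[y_p y_d]].
    by rewrite mem_filter mem_exchange eqxx andbT.
  rewrite mem_filter mem_exchange mem_tilde y_d (ltn_eqF y_p) /= orbT andbT.
  by have := d_range y y_d; lia.
apply/negP => tau_le.
have X_dom j : j < size d -> nth 0 X j <= nth 0 d j.
  by rewrite -(minor_size_eq delta_minor) => /(minor_le_nth tau_le) [].
have size_bound : count (fun y => y <= p) d <= size X.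
  rewrite count_leq_split count_uniq_mem ?sorted_ltn_uniq // p_d addn1.
  apply: leq_trans (uniq_leq_size _ sub_X); rewrite /= ?size_filter //.
  by rewrite filter_uniq ?sorted_ltn_uniq // mem_filter ltnNge (leqW p_le_q).
have := count_leq_of_nth_leq (sub_sorted ltnW d_sorted) X_dom size_bound.
by rewrite leqNgt (count_leq_lt_of_sub _ p_d X_sub) ?filter_uniq ?exchange_uniq.
Qed.

Lemma assoc_exchange_not_le_rows : n <= q -> ~~ minor_le (assoc_minor m n tau) (c, d).
Proof.
move=> n_q; rewrite assoc_minorE ?sort_sorted //; last exact: leq_total.
set D := [seq m + n + 1 - x | x <- tau & n < x].
set X := [seq e <- iota 1 m | e \notin D].
have tau_D x : x \in tau -> n < x -> m + n + 1 - x \in D.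
  by move=> x_tau n_x; apply: map_f; rewrite mem_filter n_x.
(* [m + n - q] is the row index that the new entry [q.+1] of [tau] encodes. *)
have e0_D : m + n - q \in D.
  by rewrite (_ : m + n - q = m + n + 1 - q.+1) ?tau_D ?mem_exchange ?eqxx //; lia.
have e0_c : m + n - q \in c.
  apply: contraNT q_succ_notin => e0_c.
  by rewrite mem_tilde (_ : m + n + 1 - q.+1 = m + n - q) ?e0_c ?andbT ?orbT; lia.
have X_sub x : x \in X -> x <= m + n - q -> (x < m + n - q) && (x \in c).
  rewrite mem_filter mem_iota => /andP[x_D x_range] x_le.
  have x_ne : x != m + n - q by apply: contraNneq x_D => ->.
  rewrite ltn_neqAle x_ne x_le /=; apply: contraNT x_D => x_c.
  rewrite (_ : x = m + n + 1 - (m + n + 1 - x)); last by lia.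
  apply: tau_D; last by lia.
  rewrite mem_exchange mem_tilde subKn; last by lia.
  by rewrite x_c andbT (_ : m + n + 1 - x != p) ?orbT /=; lia.
apply/negP => tau_le.
have X_dom j : j < size c -> nth 0 X j <= nth 0 c j.
  by move=> /(minor_le_nth tau_le) [].
have size_bound : count (fun y => y <= m + n - q) c <= size X.
  by apply: leq_trans (count_size _ _) _; case/andP: tau_le.
have := count_leq_of_nth_leq (sub_sorted ltnW (minor_rows_sorted delta_minor)) X_dom size_bound.
by rewrite leqNgt (count_leq_lt_of_sub _ e0_c X_sub) ?filter_uniq ?iota_uniq.
Qed.

End Exchange.

Lemma assoc_tau_not_le_delta m n (c d : seq nat) i : is_minor m n (c, d) ->
  1 <= i <= tt m n (tilde m n (c, d)) ->
  ~~ minor_le (assoc_minor m n (tau_tilde m n (tilde m n (c, d)) i)) (c, d).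
Proof.
move=> delta_minor i_range.
have [k_pos k_lt k'_end] := kk_run_ends i_range.
have [q_succ_le q_succ_notin] := run_end_succ_notin (tilde_sorted delta_minor)
  (size_tilde delta_minor) (@tilde_leq _ _ _ _ delta_minor) k'_end.
have k'_le : kk m n (tilde m n (c, d)) i.+1 <= m.
  by move: k'_end; rewrite mem_filter mem_iota; lia.
set a := tilde m n (c, d) in k_pos k_lt k'_le q_succ_le q_succ_notin *.
have size_a : size a = m by rewrite size_tilde.
have p_a : aj a (kk m n a i) \in a by rewrite /aj mem_nth // size_a; lia.
have p_le_q : aj a (kk m n a i) <= aj a (kk m n a i.+1).
  by apply/ltnW/(sorted_ltn_nth ltn_trans 0 (tilde_sorted delta_minor));
    rewrite ?unfold_in /= ?size_tilde //; lia.
have [q_n | n_q] := ltnP (aj a (kk m n a i.+1)) n.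
  exact: (assoc_exchange_not_le_cols delta_minor p_a p_le_q q_succ_le q_succ_notin q_n).
exact: (assoc_exchange_not_le_rows delta_minor p_a p_le_q q_succ_le q_succ_notin n_q).
Qed.

Section Truncation.

Variables (m n : nat) (c d : seq nat) (i : nat).
Hypothesis delta_minor : is_minor m n (c, d).

Local Notation delta_ s := (take s c, take s d).

Let delta_take : (c, d) = delta_ (size c).
Proof. by rewrite take_size take_oversize // (minor_size_eq delta_minor). Qed.

Lemma in_diff_delta : 1 <= i <= tt m n (tilde m n (c, d)) -> in_diff m n (c, d) i (c, d).
Proof.
move=> i_range; rewrite /in_diff delta_minor minor_le_refl /=.
by apply: contra (assoc_tau_not_le_delta delta_minor i_range) => /and3P[].
Qed.

Lemma in_diff_take_size (e f : seq nat) :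
  in_diff m n (c, d) i (e, f) -> in_diff m n (c, d) i (delta_ (size e)).
Proof.
case/and3P=> xi_minor delta_xi xi_notin; have /andP[/= size_le _] := delta_xi.
have e_pos : 0 < size e by case/and5P: xi_minor.
rewrite /in_diff is_minor_take ?e_pos ?size_le //= {1}delta_take minor_le_take //=.
apply: contra xi_notin => trunc_in.
exact: in_Delta_tau_le trunc_in (minor_le_take_size delta_xi) xi_minor.
Qed.

Lemma in_diff_take_mono s t : in_diff m n (c, d) i (delta_ s) -> s <= t <= size c ->
  in_diff m n (c, d) i (delta_ t).
Proof.
case/and3P=> s_minor _ s_notin /andP[s_t t_le].
have t_pos := leq_trans (is_minor_take_pos s_minor) s_t.
rewrite /in_diff is_minor_take ?t_pos ?t_le //= {1}delta_take minor_le_take //=.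
by apply: contra s_notin => t_in; apply: in_Delta_tau_le t_in (minor_le_take c d s_t) s_minor.
Qed.

End Truncation.

Theorem lemma4p7 (m n : nat) (c d : seq nat) :
  is_minor m n (c, d) ->
  forall i : nat, 1 <= i <= tt m n (tilde m n (c, d)) ->
  exists Ni : nat,
    [/\ 1 <= Ni <= size c,
        (forall e f : seq nat, in_diff m n (c, d) i (e, f) -> Ni <= size e)
      & (forall s : nat, Ni <= s <= size c ->
           in_diff m n (c, d) i (take s c, take s d))].
Proof.
move=> delta_minor i i_range.
have delta_diff : in_diff m n (c, d) i (take (size c) c, take (size c) d).
  rewrite take_size take_oversize ?(minor_size_eq delta_minor) //.
  exact: in_diff_delta.
have ex_diff : exists s, in_diff m n (c, d) i (take s c, take s d) by exists (size c).
have [N N_diff N_min] := ex_minnP ex_diff.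
exists N; split.
- by rewrite (N_min _ delta_diff) andbT; case/and3P: N_diff => /is_minor_take_pos.
- by move=> e f /(in_diff_take_size delta_minor) /N_min.
- by move=> s; apply: in_diff_take_mono.
Qed.
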